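(* For a restless bandit as in the context, every stationary policy $u$, every $S\subseteq N^{\{0,1\}}$ and every $i\in N$, $$v^S_i+\sum_{j\in S}c^S_j\,x^{0,u}_{ij}=v^u_i+\sum_{j\in N^{\{0,1\}}\setminus S}c^S_j\,x^{1,u}_{ij}.$$
   Context: Restless bandit: finite state space $N=N^{\{0,1\}}\cup N^{\{1\}}$ (disjoint); actions $a\in\{0,1\}$; one-period costs $h^a_i$; transition probabilities $p^a_{ij}$, with $p^1_{ij}=p^0_{ij}$ and $h^1_i=h^0_i$ for $i\in N^{\{1\}}$ (no effective choice there); discount factor $\beta\in(0,1)$. Stationary policies $u:N\to[0,1]$ (probability of active action) with $u(i)=1$ on $N^{\{1\}}$. $v^u_i=E^u_i[\sum_{t\ge0}h^{a(t)}_{X(t)}\beta^t]$, $x^{a,u}_{ij}=E^u_i[\sum_{t\ge0}1\{X(t)=j,a(t)=a\}\beta^t]$. For $S\subseteq N^{\{0,1\}}$ the $S$-active policy is active on $S\cup N^{\{1\}}$ and passive elsewhere; $v^S_i$ its cost measure. Marginal costs: $c^S_i=h^0_i-h^1_i+\beta\sum_{j\in N}(p^0_{ij}-p^1_{ij})v^S_j$. *)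

From HB Require Import structures.
From mathcomp Require Import all_boot all_order all_algebra.
From mathcomp Require Import all_classical all_reals all_analysis.
Set Implicit Arguments. Unset Strict Implicit. Unset Printing Implicit Defensive.
Import Order.TTheory GRing.Theory Num.Theory.
Local Open Scope ring_scope.

Section Bandit.
Context {R : realType} {T : finType}.

Definition infsum (f : nat -> R) : R := limn (fun n => \sum_(0 <= t < n) f t).

(* One-step transition kernel under the stationary randomized policy u
   (u i = probability of choosing the active action 1 in state i). *)
Definition Ppol (p0 p1 : T -> T -> R) (u : T -> R) (i j : T) : R :=
  (1 - u i) * p0 i j + u i * p1 i j.

Fixpoint Pstep (p0 p1 : T -> T -> R) (u : T -> R) (t : nat) (i j : T) : R :=
  match t with
  | 0%N => (i == j)%:R
  | t'.+1 => \sum_(k : T) Pstep p0 p1 u t' i k * Ppol p0 p1 u k j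
  end.

Definition actprob (u : T -> R) (a : bool) (j : T) : R :=
  if a then u j else 1 - u j.

(* v^u_i = E^u_i [ sum_t h^{a(t)}_{X(t)} beta^t ] *)
Definition vcost (p0 p1 : T -> T -> R) (h0 h1 : T -> R) (beta : R)
  (u : T -> R) (i : T) : R :=
  infsum (fun t => beta ^+ t *
    \sum_(j : T) Pstep p0 p1 u t i j * (actprob u false j * h0 j + actprob u true j * h1 j)).

(* x^{a,u}_{ij} = E^u_i [ sum_t 1{X(t)=j, a(t)=a} beta^t ] *)
Definition xmeas (p0 p1 : T -> T -> R) (beta : R) (a : bool)
  (u : T -> R) (i j : T) : R :=
  infsum (fun t => beta ^+ t * (Pstep p0 p1 u t i j * actprob u a j)).

Definition Sactive (N1 S : {set T}) (j : T) : R :=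
  if (j \in S) || (j \in N1) then 1 else 0.

Definition mcost (p0 p1 : T -> T -> R) (h0 h1 : T -> R) (beta : R)
  (N1 S : {set T}) (i : T) : R :=
  h0 i - h1 i + beta * \sum_(j : T) (p0 i j - p1 i j) * vcost p0 p1 h0 h1 beta (Sactive N1 S) j.

End Bandit.

(* Write r^z and K^z for the expected one-step cost and the transition kernel
   of a policy z.  The discounted occupation measure x^u = sum_t beta^t (K^u)^t
   satisfies x^u (I - beta K^u) = I, so every function v on states equals
   x^u (v - beta K^u v).  Take v = v^S: by Bellman's equation v = r^S + beta K^S v,
   and since r^z_j + beta (K^z v)_j is affine in the activation probability z_j
   with slope -c^S_j, v_j - beta (K^u v)_j = r^u_j + (u_j - S_j) c^S_j.  Summing
   against x^u gives v^u_i plus the two correction terms: u_j - 1 = -(1 - u_j) on S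
   produces the x^{0,u} sum, u_j - 0 off S and N^{1} the x^{1,u} sum, and on N^{1}
   both policies are active. *)

From HB Require Import structures.
From mathcomp Require Import all_boot all_order all_algebra.
From mathcomp Require Import all_classical all_reals all_analysis.
From mathcomp Require Import ring.
Set Implicit Arguments. Unset Strict Implicit. Unset Printing Implicit Defensive.
Import Order.TTheory GRing.Theory Num.Theory.
Import numFieldNormedType.Exports.
Local Open Scope classical_set_scope.
Local Open Scope ring_scope.

Section Infsum.
Context {R : realType}.
Implicit Types (a : nat -> R) (c : R).

Lemma cvg_big_sum (I : Type) (r : seq I) (a : I -> nat -> R) (l : I -> R) :
  (forall j, a j n @[n --> \oo] --> l j) ->
  \sum_(j <- r) a j n @[n --> \oo] --> \sum_(j <- r) l j.
Proof.
move=> al; elim: r => [|j r IH].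
  by rewrite big_nil; under eq_fun do rewrite big_nil; exact: cvg_cst.
by rewrite big_cons; under eq_fun do rewrite big_cons; exact: cvgD.
Qed.

Lemma is_cvg_series_geometric_bound a (M q : R) :
  0 <= q -> q < 1 -> (forall t, `|a t| <= M * q ^+ t) -> cvgn (series a).
Proof.
move=> q_ge0 q_lt1 a_le; apply: normed_cvg.
apply: (@series_le_cvg _ _ (geometric M q)) => // [n|n|].
- exact: normr_ge0.
- exact: le_trans (normr_ge0 _) (a_le n).
- by apply: is_cvg_geometric_series; rewrite ger0_norm.
Qed.

Lemma is_cvg_seriesMl a c : cvgn (series a) -> cvgn (series (fun t => c * a t)).
Proof.
move=> ca; apply/cvg_ex; exists (c * limn (series a)).
by rewrite /series /=; under eq_fun do rewrite -mulr_sumr; exact: cvgMl_tmp.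
Qed.

Lemma infsumMl a c : cvgn (series a) -> infsum (fun t => c * a t) = c * infsum a.
Proof.
move=> ca; apply: cvg_lim => //.
by under eq_fun do rewrite -mulr_sumr; exact: cvgMl_tmp.
Qed.

Lemma infsum_sum (I : Type) (r : seq I) (a : I -> nat -> R) :
  (forall j, cvgn (series (a j))) ->
  infsum (fun t => \sum_(j <- r) a j t) = \sum_(j <- r) infsum (a j).
Proof.
move=> ca; apply: cvg_lim => //.
by under eq_fun do rewrite exchange_big /=; exact: cvg_big_sum.
Qed.

Lemma infsum_sumMl (I : Type) (r : seq I) (c : I -> R) (a : I -> nat -> R) :
  (forall j, cvgn (series (a j))) ->
  infsum (fun t => \sum_(j <- r) c j * a j t) = \sum_(j <- r) c j * infsum (a j).
Proof.
move=> ca; rewrite infsum_sum => [|j]; last exact: is_cvg_seriesMl.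
by apply: eq_bigr => j _; rewrite infsumMl.
Qed.

Lemma infsumS a : cvgn (series a) -> infsum a = a 0%N + infsum (fun t => a t.+1).
Proof.
move=> ca.
have seriesS n : series a n.+1 = a 0%N + series (fun t => a t.+1) n.
  by rewrite /series /= big_nat_recl.
have caS : cvgn (series (fun t => a t.+1)).
  apply/cvg_ex; exists (limn (series a) - a 0%N).
  have -> : series (fun t => a t.+1) = fun n => series a n.+1 - a 0%N.
    by apply: funext => n; rewrite seriesS addrC addKr.
  apply: cvgB; last exact: cvg_cst.
  by rewrite (cvg_shiftS (series a)).
apply: cvg_lim => //; rewrite -cvg_shiftS /=.
under eq_fun do rewrite big_nat_recl //.
exact: cvgD (cvg_cst _) caS.
Qed.

End Infsum.

Lemma sum_delta_l {R : realType} {T : finType} (i : T) (F : T -> R) :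
  \sum_j (i == j)%:R * F j = F i.
Proof.
rewrite (bigD1 i) //= eqxx mul1r big1 ?addr0 // => k /negbTE.
by rewrite eq_sym => ->; rewrite mul0r.
Qed.

Lemma sum_delta_r {R : realType} {T : finType} (i : T) (F : T -> R) :
  \sum_j F j * (j == i)%:R = F i.
Proof.
rewrite (bigD1 i) //= eqxx mulr1 big1 ?addr0 // => k /negbTE ->.
by rewrite mulr0.
Qed.

Definition reward {R : realType} {T : finType} (h0 h1 u : T -> R) (j : T) : R :=
  actprob u false j * h0 j + actprob u true j * h1 j.

Section DiscountedChain.
Context {R : realType} {T : finType}.
Variables (p0 p1 : T -> T -> R) (w : T -> R) (beta : R).
Hypothesis Ppol_ge0 : forall i j, 0 <= Ppol p0 p1 w i j.
Hypothesis Ppol_sum1 : forall i, \sum_j Ppol p0 p1 w i j = 1.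
Hypothesis beta_ge0 : 0 <= beta.
Hypothesis beta_lt1 : beta < 1.

Local Notation K := (Ppol p0 p1 w).
Local Notation P := (Pstep p0 p1 w).

Lemma Pstep_ge0 t i j : 0 <= P t i j.
Proof.
elim: t i j => [|t IH] i j /=; first by rewrite ler0n.
by apply: sumr_ge0 => k _; apply: mulr_ge0.
Qed.

Lemma Pstep_sum1 t i : \sum_j P t i j = 1.
Proof.
elim: t i => [|t IH] i /=.
  by under eq_bigr do rewrite -[_%:R]mulr1; rewrite sum_delta_l.
rewrite exchange_big /= -[RHS](IH i); apply: eq_bigr => k _.
by rewrite -mulr_sumr Ppol_sum1 mulr1.
Qed.

Lemma Pstep_le1 t i j : P t i j <= 1.
Proof.
rewrite -(Pstep_sum1 t i) (bigD1 j) //= lerDl.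
by apply: sumr_ge0 => k _; apply: Pstep_ge0.
Qed.

Lemma PstepSl t i j : P t.+1 i j = \sum_k K i k * P t k j.
Proof.
elim: t i j => [|t IH] i j.
  by rewrite /= sum_delta_l; under eq_bigr do rewrite /=; rewrite sum_delta_r.
rewrite -[LHS]/(\sum_k P t.+1 i k * K k j).
under eq_bigr => k _ do rewrite IH mulr_suml.
rewrite exchange_big /=; apply: eq_bigr => l _.
by rewrite mulr_sumr; apply: eq_bigr => k _; rewrite mulrA.
Qed.

Definition occupation (i j : T) : R := infsum (fun t => beta ^+ t * P t i j).

Lemma is_cvg_occupation i j : cvgn (series (fun t => beta ^+ t * P t i j)).
Proof.
apply: (@is_cvg_series_geometric_bound _ _ 1 beta) => // t.
rewrite mul1r normrM !ger0_norm ?exprn_ge0 ?Pstep_ge0 //.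
by rewrite -[leRHS]mulr1 ler_wpM2l ?exprn_ge0 ?Pstep_le1.
Qed.
(* [cvgn] unfolds to a product, which would make [i] and [j] implicit. *)
Arguments is_cvg_occupation : clear implicits.

Lemma occupation_forward i k :
  occupation i k = (i == k)%:R + beta * \sum_j occupation i j * K j k.
Proof.
rewrite {1}/occupation (infsumS (is_cvg_occupation i k)) expr0 mul1r; congr (_ + _).
transitivity (infsum (fun t => \sum_j (beta * K j k) * (beta ^+ t * P t i j))).
  by congr infsum; apply: funext => t /=; rewrite exprS mulr_sumr;
     apply: eq_bigr => j _; ring.
rewrite infsum_sumMl => [|j]; last exact: is_cvg_occupation.
by rewrite mulr_sumr; apply: eq_bigr => j _; rewrite /occupation; ring.
Qed.

Lemma occupation_backward i k :
  occupation i k = (i == k)%:R + beta * \sum_j K i j * occupation j k.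
Proof.
rewrite {1}/occupation (infsumS (is_cvg_occupation i k)) expr0 mul1r; congr (_ + _).
transitivity (infsum (fun t => \sum_j (beta * K i j) * (beta ^+ t * P t j k))).
  by congr infsum; apply: funext => t; rewrite PstepSl exprS mulr_sumr;
     apply: eq_bigr => j _; ring.
rewrite infsum_sumMl => [|j]; last exact: is_cvg_occupation.
by rewrite mulr_sumr; apply: eq_bigr => j _; rewrite /occupation; ring.
Qed.

Lemma vcostE h0 h1 i :
  vcost p0 p1 h0 h1 beta w i = \sum_j occupation i j * reward h0 h1 w j.
Proof.
transitivity (infsum (fun t => \sum_j reward h0 h1 w j * (beta ^+ t * P t i j))).
  rewrite /vcost; congr infsum; apply: funext => t; rewrite mulr_sumr.
  by apply: eq_bigr => j _; rewrite /reward; ring.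
rewrite infsum_sumMl => [|j]; last exact: is_cvg_occupation.
by apply: eq_bigr => j _; rewrite mulrC.
Qed.

Lemma xmeasE a i j : xmeas p0 p1 beta a w i j = occupation i j * actprob w a j.
Proof.
rewrite /xmeas; under eq_fun do rewrite mulrA mulrC.
by rewrite (infsumMl _ (is_cvg_occupation i j)) mulrC.
Qed.

Lemma sum_xmeas (A : {set T}) (c : T -> R) a i :
  \sum_(j in A) c j * xmeas p0 p1 beta a w i j
  = \sum_j occupation i j * (if j \in A then c j * actprob w a j else 0).
Proof.
rewrite big_mkcond; apply: eq_bigr => j _; rewrite xmeasE.
by case: ifP => _; [rewrite mulrCA | rewrite mulr0].
Qed.

Lemma vcost_bellman h0 h1 i :
  vcost p0 p1 h0 h1 beta w i
  = reward h0 h1 w i + beta * \sum_k K i k * vcost p0 p1 h0 h1 beta w k.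
Proof.
rewrite vcostE; under eq_bigr do rewrite occupation_backward mulrDl.
rewrite big_split sum_delta_l /=; congr (_ + _).
under eq_bigr do rewrite -mulrA (@mulr_suml R).
rewrite -mulr_sumr exchange_big /=; congr (_ * _); apply: eq_bigr => k _.
by rewrite vcostE mulr_sumr; apply: eq_bigr => j _; rewrite mulrA.
Qed.

Lemma occupation_telescope (v : T -> R) i :
  \sum_j occupation i j * (v j - beta * \sum_k K j k * v k) = v i.
Proof.
have occ_step k : beta * \sum_j occupation i j * K j k = occupation i k - (i == k)%:R.
  by rewrite [in RHS]occupation_forward addrC addKr.
transitivity (\sum_k occupation i k * v k
              - \sum_k (beta * \sum_j occupation i j * K j k) * v k).
  under eq_bigr do rewrite mulrBr; rewrite sumrB; congr (_ - _).
  under eq_bigr do rewrite mulrCA mulr_sumr; rewrite -mulr_sumr exchange_big /=.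
  rewrite mulr_sumr; apply: eq_bigr => k _; rewrite -mulrA (@mulr_suml R).
  by congr (_ * _); apply: eq_bigr => j _; rewrite mulrA.
under [X in _ - X]eq_bigr do rewrite occ_step mulrBl.
by rewrite sumrB sum_delta_l opprB addrC subrK.
Qed.

End DiscountedChain.

Section PolicyComparison.
Context {R : realType} {T : finType}.

Lemma Ppol_ge0 (p0 p1 : T -> T -> R) (u : T -> R) :
  (forall i j, 0 <= p0 i j) -> (forall i j, 0 <= p1 i j) ->
  (forall i, 0 <= u i) -> (forall i, u i <= 1) ->
  forall i j, 0 <= Ppol p0 p1 u i j.
Proof.
move=> p0_ge0 p1_ge0 u_ge0 u_le1 i j.
by rewrite /Ppol addr_ge0 ?mulr_ge0 ?subr_ge0.
Qed.

Lemma Ppol_sum1 (p0 p1 : T -> T -> R) (u : T -> R) :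
  (forall i, \sum_j p0 i j = 1) -> (forall i, \sum_j p1 i j = 1) ->
  forall i, \sum_j Ppol p0 p1 u i j = 1.
Proof.
move=> p0_sum1 p1_sum1 i.
by rewrite /Ppol big_split /= -!mulr_sumr p0_sum1 p1_sum1 !mulr1 subrK.
Qed.

Lemma Ppol_mean (p0 p1 : T -> T -> R) (u v : T -> R) j :
  \sum_k Ppol p0 p1 u j k * v k
  = actprob u false j * \sum_k p0 j k * v k + actprob u true j * \sum_k p1 j k * v k.
Proof.
rewrite /Ppol /actprob !mulr_sumr -big_split /=.
by apply: eq_bigr => k _; rewrite mulrDl !mulrA.
Qed.

Lemma one_step_cost_difference (h0 h1 : T -> R) (p0 p1 : T -> T -> R) (beta : R)
    (v u w : T -> R) j :
  reward h0 h1 w j + beta * \sum_k Ppol p0 p1 w j k * v k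
  - (reward h0 h1 u j + beta * \sum_k Ppol p0 p1 u j k * v k)
  = (u j - w j) * (h0 j - h1 j + beta * \sum_k (p0 j k - p1 j k) * v k).
Proof.
rewrite !Ppol_mean /reward /actprob.
under [in RHS]eq_bigr do rewrite mulrBl.
rewrite sumrB; ring.
Qed.

Lemma Sactive_gap (N1 S : {set T}) (u : T -> R) (c : R) j :
  S \subset ~: N1 -> (forall i, i \in N1 -> u i = 1) ->
  (u j - Sactive N1 S j) * c
  = (if j \in ~: N1 :\: S then c * actprob u true j else 0)
    - (if j \in S then c * actprob u false j else 0).
Proof.
move=> SN01 uN1; rewrite /Sactive /actprob finset.in_setD finset.in_setC.
have [jN1|_] := boolP (j \in N1).
  have jS : j \notin S.
    by apply: contraL jN1 => /(fintype.subsetP SN01); rewrite finset.in_setC.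
  by rewrite (negbTE jS) uN1 // !subrr mul0r.
by case: (j \in S) => /=; ring.
Qed.

End PolicyComparison.

Theorem proposition6 (R : realType) (T : finType)
  (N1 : {set T})                      (* N^{1}; N^{0,1} = ~: N1 *)
  (h0 h1 : T -> R) (p0 p1 : T -> T -> R) (beta : R)
  (p0_ge0 : forall i j, 0 <= p0 i j) (p1_ge0 : forall i j, 0 <= p1 i j)
  (p0_sum1 : forall i, \sum_(j : T) p0 i j = 1)
  (p1_sum1 : forall i, \sum_(j : T) p1 i j = 1)
  (hN1 : forall i, i \in N1 -> h1 i = h0 i)
  (pN1 : forall i j, i \in N1 -> p1 i j = p0 i j)
  (beta_gt0 : 0 < beta) (beta_lt1 : beta < 1)
  (u : T -> R) (u_ge0 : forall i, 0 <= u i) (u_le1 : forall i, u i <= 1)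
  (uN1 : forall i, i \in N1 -> u i = 1)
  (S : {set T}) (HS : S \subset ~: N1) (i : T) :
  vcost p0 p1 h0 h1 beta (Sactive N1 S) i
    + \sum_(j in S) mcost p0 p1 h0 h1 beta N1 S j * xmeas p0 p1 beta false u i j
  = vcost p0 p1 h0 h1 beta u i
    + \sum_(j in ~: N1 :\: S) mcost p0 p1 h0 h1 beta N1 S j * xmeas p0 p1 beta true u i j.
Proof.
set w := Sactive N1 S; set v := vcost p0 p1 h0 h1 beta w.
set c := mcost p0 p1 h0 h1 beta N1 S.
have w_ge0 j : 0 <= w j by rewrite /w /Sactive; case: ifP.
have w_le1 j : w j <= 1 by rewrite /w /Sactive; case: ifP.
have beta_ge0 := ltW beta_gt0.
have Kw_ge0 := Ppol_ge0 p0_ge0 p1_ge0 w_ge0 w_le1.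
have Ku_ge0 := Ppol_ge0 p0_ge0 p1_ge0 u_ge0 u_le1.
have Kw_sum1 := Ppol_sum1 w p0_sum1 p1_sum1.
have Ku_sum1 := Ppol_sum1 u p0_sum1 p1_sum1.
have gap j : v j - beta * \sum_k Ppol p0 p1 u j k * v k
             = reward h0 h1 u j + (u j - w j) * c j.
  have := one_step_cost_difference h0 h1 p0 p1 beta v u w j.
  rewrite -(vcost_bellman Kw_ge0 Kw_sum1 beta_ge0 beta_lt1) -/v => diff.
  by rewrite /c /mcost -/w -/v -diff; ring.
rewrite !(sum_xmeas Ku_ge0 Ku_sum1 beta_ge0 beta_lt1).
rewrite -{1}(occupation_telescope Ku_ge0 Ku_sum1 beta_ge0 beta_lt1 v i).
under eq_bigr => j _ do rewrite gap (Sactive_gap (c j) j HS uN1) mulrDr mulrBr.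
rewrite big_split sumrB -(vcostE Ku_ge0 Ku_sum1 beta_ge0 beta_lt1) /=.
ring.
Qed.
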